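(* Let $A:[0,T]\to\mathbb{C}^{m\times m}$ be continuous. (i) If $\big[A(t),\int_0^tA(s)ds\big]=0$ for all $t\in[0,T]$, then $\Omega_k\equiv0$ on $[0,T]$ for all $k>1$, so $\Omega(t)=\int_0^tA(s)ds$. (ii) More generally, if for some $n\ge1$, $[A(s_1),[A(s_2),[\cdots,[A(s_n),A(s_{n+1})]\cdots]]]=0$ for all $s_1,\dots,s_{n+1}\in[0,T]$, then $\Omega_k\equiv0$ on $[0,T]$ for all $k>n$.
   Context: Magnus terms: $\Omega_1(t)=\int_0^tA(s)ds$ and for $n\ge2$, $\Omega_n(t)=\sum_{j=1}^{n-1}\frac{B_j}{j!}\sum_{k_1+\cdots+k_j=n-1,\ k_i\ge1}\int_0^t\mathrm{ad}_{\Omega_{k_1}(s)}\cdots\mathrm{ad}_{\Omega_{k_j}(s)}A(s)\,ds$, where $\mathrm{ad}_XY=[X,Y]=XY-YX$ and $\frac{x}{e^x-1}=\sum_j\frac{B_j}{j!}x^j$. $\Omega=\sum_k\Omega_k$. *)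

From Stdlib Require Import Reals List ClassicalEpsilon Factorial.
Open Scope R_scope.

Definition Cx := (R * R)%type.
Definition Cx0 : Cx := (0, 0).
Definition Cxadd (a b : Cx) : Cx := (fst a + fst b, snd a + snd b).
Definition Cxopp (a : Cx) : Cx := (- fst a, - snd a).
Definition Cxmul (a b : Cx) : Cx :=
  (fst a * fst b - snd a * snd b, fst a * snd b + snd a * fst b).
Definition Cxscal (r : R) (a : Cx) : Cx := (r * fst a, r * snd a).

(* Entries outside the range i, j < m are irrelevant: all operations below
   only use indices < m, and all statements only inspect indices < m. *)
Definition Mat := nat -> nat -> Cx.
Definition mzero : Mat := fun _ _ => Cx0.
Definition madd (X Y : Mat) : Mat := fun i j => Cxadd (X i j) (Y i j).
Definition mopp (X : Mat) : Mat := fun i j => Cxopp (X i j).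
Definition mscal (r : R) (X : Mat) : Mat := fun i j => Cxscal r (X i j).
Definition msum (l : list Mat) : Mat := fold_right madd mzero l.
Definition mmul (m : nat) (X Y : Mat) : Mat :=
  fun i j => fold_right Cxadd Cx0 (map (fun k => Cxmul (X i k) (Y k j)) (seq 0 m)).
Definition comm (m : nat) (X Y : Mat) : Mat := madd (mmul m X Y) (mopp (mmul m Y X)).

Definition mat_eq (m : nat) (X Y : Mat) : Prop :=
  forall i j, (i < m)%nat -> (j < m)%nat -> X i j = Y i j.

Definition Rint (f : R -> R) (a b : R) : R :=
  epsilon (inhabits 0) (fun v => exists pr : Riemann_integrable f a b, RiemannInt pr = v).
Definition mint (F : R -> Mat) (a b : R) : Mat :=
  fun i j => (Rint (fun s => fst (F s i j)) a b, Rint (fun s => snd (F s i j)) a b).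

Definition cont_on (f : R -> R) (a b : R) : Prop :=
  forall x, a <= x <= b -> limit1_in f (fun y => a <= y <= b) (f x) x.
Definition mcont_on (m : nat) (A : R -> Mat) (a b : R) : Prop :=
  forall i j, (i < m)%nat -> (j < m)%nat ->
    cont_on (fun s => fst (A s i j)) a b /\ cont_on (fun s => snd (A s i j)) a b.

(* ---------- Bernoulli numbers, x/(e^x-1) = sum_j B_j/j! x^j  (B_1 = -1/2) ----
   Defined by the standard equivalent recurrence B_0 = 1,
   sum_{k=0}^{N} C(N+1,k) B_k = 0 for N >= 1. *)
Fixpoint bernUpTo (n : nat) : nat -> R :=
  match n with
  | O => fun _ => 1
  | S n' => fun k =>
      if Nat.leb k n' then bernUpTo n' k
      else - / INR (n' + 2) * sum_f_R0 (fun k' => C (n' + 2) k' * bernUpTo n' k') n'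
  end.
Definition bernoulli (n : nat) : R := bernUpTo n n.

(* adsum m om A s j r = sum over compositions k_1+...+k_j = r, k_i >= 1, of
   ad_{om k_1 s} ... ad_{om k_j s} (A s)  (for j = 0: A s if r = 0, else 0). *)
Fixpoint adsum (m : nat) (om : nat -> R -> Mat) (A : R -> Mat) (s : R)
    (j r : nat) : Mat :=
  match j with
  | O => if Nat.eqb r 0 then A s else mzero
  | S j' => msum (map (fun k => comm m (om k s) (adsum m om A s j' (r - k)))
                      (seq 1 r))
  end.

(* Omega_n(t) for n >= 2, given the previous terms om k, 1 <= k < n *)
Definition OmegaStep (m : nat) (om : nat -> R -> Mat) (A : R -> Mat) (n : nat)
    (t : R) : Mat :=
  mint (fun s => msum (map (fun j => mscal (bernoulli j / INR (fact j))
                                           (adsum m om A s j (n - 1)))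
                           (seq 1 (n - 1)))) 0 t.

(* OmegaUpTo n k is Omega_k for 1 <= k <= n *)
Fixpoint OmegaUpTo (m : nat) (A : R -> Mat) (n : nat) : nat -> R -> Mat :=
  match n with
  | O => fun _ _ => mzero
  | S n' => fun k t =>
      if Nat.leb k n' then OmegaUpTo m A n' k t
      else match n' with
           | O => mint A 0 t
           | _ => OmegaStep m (OmegaUpTo m A n') A (S n') t
           end
  end.

Definition Omega (m : nat) (A : R -> Mat) (k : nat) (t : R) : Mat :=
  OmegaUpTo m A k k t.

Fixpoint ncomm (m : nat) (A : R -> Mat) (n : nat) (s : nat -> R) : Mat :=
  match n with
  | O => A (s O)
  | S n' => comm m (A (s O)) (ncomm m A n' (fun i => s (S i)))
  end.

From Stdlib Require Import Reals List ClassicalEpsilon Lra Lia FunctionalExtensionality Factorial Arith.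
Open Scope R_scope.

(* Everything rests on the fact that Omega_k is built from k-fold nested commutators
   of values of A.
   (i) By strong induction on k >= 2: the integrand of Omega_k is a combination of
   ad_{Omega_(k_1)} ... ad_{Omega_(k_j)} A over compositions k_1 + ... + k_j = k - 1.
   A term with some k_i >= 2 vanishes by induction; the remaining one ends in
   ad_{Omega_1(s)} A(s) = - [A(s), int_0^s A] = 0.
   (ii) We introduce the commutator degree of a matrix: values A(s) have degree 1,
   ad_{A(s)} raises the degree by one, and the class of each degree is closed under
   linear combinations and integrals of continuous families. The Jacobi identity
   shows that degrees add under commutators, hence Omega_k has degree k. Finally an
   iterated adjoint action ad_{A(s_1)} ... ad_{A(s_l)} annihilates every matrix of
   degree d with l + d > n (the base case is the hypothesis); taking l = 0 gives
   Omega_k = 0 for k > n. *)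

Lemma Cx_ext (a b : Cx) : fst a = fst b -> snd a = snd b -> a = b.
Proof. destruct a, b; simpl; intros; subst; reflexivity. Qed.

Ltac cx_ring := repeat match goal with a : Cx |- _ => destruct a end;
  unfold Cxadd, Cxopp, Cxmul, Cxscal, Cx0; apply Cx_ext; simpl; ring.

Definition csum (f : nat -> Cx) (l : list nat) : Cx := fold_right Cxadd Cx0 (map f l).

Lemma csum_ext f g l : (forall k, In k l -> f k = g k) -> csum f l = csum g l.
Proof.
  induction l as [|a l IH]; intros H; [reflexivity|].
  unfold csum in *; simpl in *; rewrite H, IH; auto.
Qed.

Lemma csum_zero f l : (forall k, In k l -> f k = Cx0) -> csum f l = Cx0.
Proof.
  induction l as [|a l IH]; intros H; [reflexivity|].
  unfold csum in *; simpl in *; rewrite H, IH; auto; cx_ring.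
Qed.

Lemma csum_add f g l : csum (fun k => Cxadd (f k) (g k)) l = Cxadd (csum f l) (csum g l).
Proof.
  induction l as [|a l IH]; unfold csum in *; simpl; [cx_ring|].
  rewrite IH; generalize (fold_right Cxadd Cx0 (map f l)) (fold_right Cxadd Cx0 (map g l)).
  intros; cx_ring.
Qed.

Lemma csum_additive (phi : Cx -> Cx) f l :
  (forall x y, phi (Cxadd x y) = Cxadd (phi x) (phi y)) -> phi Cx0 = Cx0 ->
  csum (fun k => phi (f k)) l = phi (csum f l).
Proof.
  intros Hadd H0; induction l as [|a l IH]; unfold csum in *; simpl; [now rewrite H0|].
  now rewrite IH, Hadd.
Qed.

Lemma csum_opp f l : csum (fun k => Cxopp (f k)) l = Cxopp (csum f l).
Proof. apply (csum_additive Cxopp); intros; cx_ring. Qed.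
Lemma csum_scal r f l : csum (fun k => Cxscal r (f k)) l = Cxscal r (csum f l).
Proof. apply (csum_additive (Cxscal r)); intros; cx_ring. Qed.
Lemma csum_mull c f l : csum (fun k => Cxmul c (f k)) l = Cxmul c (csum f l).
Proof. apply (csum_additive (Cxmul c)); intros; cx_ring. Qed.
Lemma csum_mulr c f l : csum (fun k => Cxmul (f k) c) l = Cxmul (csum f l) c.
Proof. apply (csum_additive (fun x => Cxmul x c)); intros; cx_ring. Qed.

Lemma csum_swap (F : nat -> nat -> Cx) l1 l2 :
  csum (fun k => csum (fun j => F k j) l2) l1 = csum (fun j => csum (fun k => F k j) l1) l2.
Proof.
  induction l1 as [|a l1 IH]; simpl.
  - symmetry; apply csum_zero; reflexivity.
  - change (Cxadd (csum (fun j => F a j) l2) (csum (fun k => csum (fun j => F k j) l2) l1)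
            = csum (fun j => Cxadd (F a j) (csum (fun k => F k j) l1)) l2).
    now rewrite IH, csum_add.
Qed.

Section MatrixAlgebra.
Variable m : nat.

Lemma mat_ext (X Y : Mat) : (forall i j, X i j = Y i j) -> X = Y.
Proof. intros H; do 2 (apply functional_extensionality; intro); apply H. Qed.

Lemma mmul_entry X Y i j : mmul m X Y i j = csum (fun k => Cxmul (X i k) (Y k j)) (seq 0 m).
Proof. reflexivity. Qed.

Lemma mmul_assoc X Y Z : mmul m (mmul m X Y) Z = mmul m X (mmul m Y Z).
Proof.
  apply mat_ext; intros i j; rewrite !mmul_entry.
  transitivity (csum (fun k => csum (fun l => Cxmul (X i l) (Cxmul (Y l k) (Z k j)))
                                    (seq 0 m)) (seq 0 m)).
  - apply csum_ext; intros k _; rewrite mmul_entry, <- csum_mulr.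
    apply csum_ext; intros; cx_ring.
  - rewrite csum_swap; apply csum_ext; intros l _; now rewrite mmul_entry, <- csum_mull.
Qed.

Lemma mmul_addl X Y Z : mmul m (madd X Y) Z = madd (mmul m X Z) (mmul m Y Z).
Proof.
  apply mat_ext; intros i j; unfold madd at 2; rewrite !mmul_entry, <- csum_add.
  apply csum_ext; intros; unfold madd; cx_ring.
Qed.
Lemma mmul_addr X Y Z : mmul m X (madd Y Z) = madd (mmul m X Y) (mmul m X Z).
Proof.
  apply mat_ext; intros i j; unfold madd at 2; rewrite !mmul_entry, <- csum_add.
  apply csum_ext; intros; unfold madd; cx_ring.
Qed.
Lemma mmul_oppl X Z : mmul m (mopp X) Z = mopp (mmul m X Z).
Proof.
  apply mat_ext; intros i j; unfold mopp at 2; rewrite !mmul_entry, <- csum_opp.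
  apply csum_ext; intros; unfold mopp; cx_ring.
Qed.
Lemma mmul_oppr X Z : mmul m X (mopp Z) = mopp (mmul m X Z).
Proof.
  apply mat_ext; intros i j; unfold mopp at 2; rewrite !mmul_entry, <- csum_opp.
  apply csum_ext; intros; unfold mopp; cx_ring.
Qed.
Lemma mmul_scall r X Z : mmul m (mscal r X) Z = mscal r (mmul m X Z).
Proof.
  apply mat_ext; intros i j; unfold mscal at 2; rewrite !mmul_entry, <- csum_scal.
  apply csum_ext; intros; unfold mscal; cx_ring.
Qed.
Lemma mmul_scalr r X Z : mmul m X (mscal r Z) = mscal r (mmul m X Z).
Proof.
  apply mat_ext; intros i j; unfold mscal at 2; rewrite !mmul_entry, <- csum_scal.
  apply csum_ext; intros; unfold mscal; cx_ring.
Qed.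
Lemma mmul_0l Z : mmul m mzero Z = mzero.
Proof. apply mat_ext; intros i j; apply csum_zero; intros; unfold mzero; cx_ring. Qed.
Lemma mmul_0r Z : mmul m Z mzero = mzero.
Proof. apply mat_ext; intros i j; apply csum_zero; intros; unfold mzero; cx_ring. Qed.

(* Entrywise ring identities, treating every matrix product entry as an atom. *)
Ltac mat_ring := apply mat_ext; intros; unfold madd, mopp, mscal, mzero;
  repeat match goal with |- context [mmul ?n ?X ?Y ?i ?j] => generalize (mmul n X Y i j); intro end;
  cx_ring.

Lemma comm_anti X Y : comm m X Y = mopp (comm m Y X).
Proof. unfold comm; mat_ring. Qed.
Lemma comm_addl X Y Z : comm m (madd X Y) Z = madd (comm m X Z) (comm m Y Z).
Proof. unfold comm; rewrite mmul_addl, mmul_addr; mat_ring. Qed.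
Lemma comm_addr X Y Z : comm m X (madd Y Z) = madd (comm m X Y) (comm m X Z).
Proof. unfold comm; rewrite mmul_addl, mmul_addr; mat_ring. Qed.
Lemma comm_oppl X Z : comm m (mopp X) Z = mopp (comm m X Z).
Proof. unfold comm; rewrite mmul_oppl, mmul_oppr; mat_ring. Qed.
Lemma comm_oppr X Z : comm m X (mopp Z) = mopp (comm m X Z).
Proof. unfold comm; rewrite mmul_oppl, mmul_oppr; mat_ring. Qed.
Lemma comm_scall r X Z : comm m (mscal r X) Z = mscal r (comm m X Z).
Proof. unfold comm; rewrite mmul_scall, mmul_scalr; mat_ring. Qed.
Lemma comm_scalr r X Z : comm m X (mscal r Z) = mscal r (comm m X Z).
Proof. unfold comm; rewrite mmul_scall, mmul_scalr; mat_ring. Qed.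
Lemma comm_0l Z : comm m mzero Z = mzero.
Proof. unfold comm; rewrite mmul_0l, mmul_0r; mat_ring. Qed.
Lemma comm_0r Z : comm m Z mzero = mzero.
Proof. unfold comm; rewrite mmul_0l, mmul_0r; mat_ring. Qed.

Lemma jacobi P Q Y :
  comm m (comm m P Q) Y = madd (comm m P (comm m Q Y)) (mopp (comm m Q (comm m P Y))).
Proof.
  unfold comm; rewrite !mmul_addl, !mmul_addr, !mmul_oppl, !mmul_oppr, !mmul_assoc; mat_ring.
Qed.
End MatrixAlgebra.

Section BlockEquality.
Variable m : nat.

Lemma meq_refl X : mat_eq m X X.
Proof. intros i j _ _; reflexivity. Qed.
Lemma meq_sym X Y : mat_eq m X Y -> mat_eq m Y X.
Proof. intros H i j Hi Hj; symmetry; auto. Qed.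
Lemma meq_trans X Y Z : mat_eq m X Y -> mat_eq m Y Z -> mat_eq m X Z.
Proof. intros H1 H2 i j Hi Hj; rewrite H1; auto. Qed.

Lemma mmul_compat X X' Y Y' :
  mat_eq m X X' -> mat_eq m Y Y' -> mat_eq m (mmul m X Y) (mmul m X' Y').
Proof.
  intros H1 H2 i j Hi Hj; rewrite !mmul_entry; apply csum_ext; intros k Hk.
  apply in_seq in Hk; rewrite H1, H2; auto; lia.
Qed.
Lemma madd_compat X X' Y Y' : mat_eq m X X' -> mat_eq m Y Y' -> mat_eq m (madd X Y) (madd X' Y').
Proof. intros H1 H2 i j Hi Hj; unfold madd; rewrite H1, H2; auto. Qed.
Lemma mopp_compat X X' : mat_eq m X X' -> mat_eq m (mopp X) (mopp X').
Proof. intros H i j Hi Hj; unfold mopp; rewrite H; auto. Qed.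
Lemma comm_compat X X' Y Y' :
  mat_eq m X X' -> mat_eq m Y Y' -> mat_eq m (comm m X Y) (comm m X' Y').
Proof. intros; unfold comm; apply madd_compat; [|apply mopp_compat]; apply mmul_compat; auto. Qed.

Lemma madd_vanish X Y : mat_eq m X mzero -> mat_eq m Y mzero -> mat_eq m (madd X Y) mzero.
Proof. intros H1 H2 i j Hi Hj; unfold madd; rewrite H1, H2; auto; unfold mzero; cx_ring. Qed.
Lemma mopp_vanish X : mat_eq m X mzero -> mat_eq m (mopp X) mzero.
Proof. intros H i j Hi Hj; unfold mopp; rewrite H; auto; unfold mzero; cx_ring. Qed.
Lemma mscal_vanish r X : mat_eq m X mzero -> mat_eq m (mscal r X) mzero.
Proof. intros H i j Hi Hj; unfold mscal; rewrite H; auto; unfold mzero; cx_ring. Qed.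
Lemma comm_vanish_l X Y : mat_eq m X mzero -> mat_eq m (comm m X Y) mzero.
Proof. intros; rewrite <- (comm_0l m Y); apply comm_compat; auto using meq_refl. Qed.
Lemma comm_vanish_r X Y : mat_eq m Y mzero -> mat_eq m (comm m X Y) mzero.
Proof. intros; rewrite <- (comm_0r m X); apply comm_compat; auto using meq_refl. Qed.

Lemma msum_vanish (f : nat -> Mat) l :
  (forall j, In j l -> mat_eq m (f j) mzero) -> mat_eq m (msum (map f l)) mzero.
Proof.
  induction l as [|a l IH]; intros H; [apply meq_refl|].
  apply madd_vanish; [apply H; left|apply IH; intros; apply H; right]; auto.
Qed.
End BlockEquality.

Definition ad_chain (m : nat) (A : R -> Mat) (ss : list R) (X : Mat) : Mat :=
  fold_right (fun s Y => comm m (A s) Y) X ss.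

Section AdjointChains.
Variables (m : nat) (A : R -> Mat).

Lemma ad_chain_app l1 l2 X : ad_chain m A (l1 ++ l2) X = ad_chain m A l1 (ad_chain m A l2 X).
Proof. unfold ad_chain; now rewrite fold_right_app. Qed.

Lemma ad_chain_compat ss X Y : mat_eq m X Y -> mat_eq m (ad_chain m A ss X) (ad_chain m A ss Y).
Proof. induction ss; simpl; intros; auto using comm_compat, meq_refl. Qed.
Lemma ad_chain_vanish ss X : mat_eq m X mzero -> mat_eq m (ad_chain m A ss X) mzero.
Proof. induction ss; simpl; intros; auto using comm_vanish_r. Qed.

Lemma ad_chain_add ss X Y :
  ad_chain m A ss (madd X Y) = madd (ad_chain m A ss X) (ad_chain m A ss Y).
Proof. induction ss as [|s ss IH]; simpl; auto; now rewrite IH, comm_addr. Qed.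
Lemma ad_chain_opp ss X : ad_chain m A ss (mopp X) = mopp (ad_chain m A ss X).
Proof. induction ss as [|s ss IH]; simpl; auto; now rewrite IH, comm_oppr. Qed.
Lemma ad_chain_scal ss r X : ad_chain m A ss (mscal r X) = mscal r (ad_chain m A ss X).
Proof. induction ss as [|s ss IH]; simpl; auto; now rewrite IH, comm_scalr. Qed.
Lemma ad_chain_0 ss : ad_chain m A ss mzero = mzero.
Proof. induction ss as [|s ss IH]; simpl; auto; now rewrite IH, comm_0r. Qed.

Lemma ncomm_ad_chain l s :
  ncomm m A (length l) (fun i => nth i (l ++ s :: nil) 0) = ad_chain m A l (A s).
Proof. induction l as [|a l IH]; simpl; auto; now rewrite IH. Qed.
End AdjointChains.

Section Continuity.
Variables a b : R.

Lemma cont_plus f g : cont_on f a b -> cont_on g a b -> cont_on (fun x => f x + g x) a b.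
Proof. intros H1 H2 x Hx; apply limit_plus; auto. Qed.
Lemma cont_mult f g : cont_on f a b -> cont_on g a b -> cont_on (fun x => f x * g x) a b.
Proof. intros H1 H2 x Hx; apply limit_mul; auto. Qed.
Lemma cont_opp f : cont_on f a b -> cont_on (fun x => - f x) a b.
Proof. intros H x Hx; apply limit_Ropp; auto. Qed.
Lemma cont_const c : cont_on (fun _ => c) a b.
Proof. intros x Hx; exact (limit_free (fun _ => c) _ x x). Qed.

Definition ccont_on (h : R -> Cx) : Prop :=
  cont_on (fun s => fst (h s)) a b /\ cont_on (fun s => snd (h s)) a b.

Lemma ccont_add h1 h2 : ccont_on h1 -> ccont_on h2 -> ccont_on (fun s => Cxadd (h1 s) (h2 s)).
Proof. intros [] []; split; simpl; apply cont_plus; auto. Qed.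
Lemma ccont_opp h : ccont_on h -> ccont_on (fun s => Cxopp (h s)).
Proof. intros []; split; simpl; apply cont_opp; auto. Qed.
Lemma ccont_mul h1 h2 : ccont_on h1 -> ccont_on h2 -> ccont_on (fun s => Cxmul (h1 s) (h2 s)).
Proof.
  intros [] []; split; simpl; unfold Rminus;
    apply cont_plus; try apply cont_opp; apply cont_mult; auto.
Qed.
Lemma ccont_scal r h : ccont_on h -> ccont_on (fun s => Cxscal r (h s)).
Proof. intros []; split; simpl; apply cont_mult; auto using cont_const. Qed.
Lemma ccont_const c : ccont_on (fun _ => c).
Proof. split; apply cont_const. Qed.
Lemma ccont_csum (h : nat -> R -> Cx) l :
  (forall k, In k l -> ccont_on (h k)) -> ccont_on (fun s => csum (fun k => h k s) l).
Proof.
  induction l as [|k l IH]; intros H; [apply (ccont_const Cx0)|].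
  apply ccont_add; [apply H; left|apply IH; intros; apply H; right]; auto.
Qed.

Variable m : nat.

Lemma mcont_const X : mcont_on m (fun _ => X) a b.
Proof. intros i j _ _; apply ccont_const. Qed.
Lemma mcont_add F G : mcont_on m F a b -> mcont_on m G a b ->
  mcont_on m (fun s => madd (F s) (G s)) a b.
Proof. intros H1 H2 i j Hi Hj; apply ccont_add; [apply H1|apply H2]; auto. Qed.
Lemma mcont_opp F : mcont_on m F a b -> mcont_on m (fun s => mopp (F s)) a b.
Proof. intros H i j Hi Hj; apply ccont_opp, H; auto. Qed.
Lemma mcont_scal r F : mcont_on m F a b -> mcont_on m (fun s => mscal r (F s)) a b.
Proof. intros H i j Hi Hj; apply ccont_scal, H; auto. Qed.
Lemma mcont_mmul F G : mcont_on m F a b -> mcont_on m G a b ->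
  mcont_on m (fun s => mmul m (F s) (G s)) a b.
Proof.
  intros H1 H2 i j Hi Hj; apply (ccont_csum (fun k s => Cxmul (F s i k) (G s k j))).
  intros k Hk; apply in_seq in Hk; apply ccont_mul; [apply H1|apply H2]; auto; lia.
Qed.
Lemma mcont_comm F G : mcont_on m F a b -> mcont_on m G a b ->
  mcont_on m (fun s => comm m (F s) (G s)) a b.
Proof. intros; unfold comm; apply mcont_add; [|apply mcont_opp]; apply mcont_mmul; auto. Qed.
Lemma mcont_msum (G : nat -> R -> Mat) l :
  (forall j, In j l -> mcont_on m (G j) a b) ->
  mcont_on m (fun s => msum (map (fun j => G j s) l)) a b.
Proof.
  induction l as [|j l IH]; intros H; [apply (mcont_const mzero)|].
  apply (mcont_add (G j) (fun s => msum (map (fun j => G j s) l)));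
    [apply H; left|apply IH; intros; apply H; right]; auto.
Qed.
Lemma mcont_ad_chain (A : R -> Mat) ss F :
  mcont_on m F a b -> mcont_on m (fun u => ad_chain m A ss (F u)) a b.
Proof.
  induction ss as [|s ss IH]; simpl; intros H; auto.
  apply (mcont_comm (fun _ => A s)); auto using mcont_const.
Qed.
End Continuity.

Definition is_integral (f : R -> R) (a b v : R) : Prop :=
  exists pr : Riemann_integrable f a b, RiemannInt pr = v.

Lemma Rint_of f a b v : is_integral f a b v -> Rint f a b = v.
Proof.
  intros [pr Hpr]; unfold Rint.
  destruct (epsilon_spec (inhabits 0)
    (fun v => exists pr : Riemann_integrable f a b, RiemannInt pr = v)
    (ex_intro _ (RiemannInt pr) (ex_intro _ pr eq_refl))) as [pr' Hpr'].
  rewrite <- Hpr', <- Hpr; apply RiemannInt_P5.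
Qed.

Section RiemannIntegral.
Variables a b : R.

Lemma is_integral_0 : is_integral (fun _ => 0) a b 0.
Proof.
  exists (RiemannInt_P14 a b 0).
  pose proof (RiemannInt_P15 (RiemannInt_P14 a b 0)) as E; now rewrite Rmult_0_l in E.
Qed.

Lemma is_integral_add f g v w :
  is_integral f a b v -> is_integral g a b w -> is_integral (fun x => f x + g x) a b (v + w).
Proof.
  intros [pf Hf] [pg Hg].
  pose proof (RiemannInt_P10 1 pf pg) as pfg.
  pose proof (RiemannInt_P13 pf pg pfg) as E.
  assert (Efg : (fun x => f x + 1 * g x) = (fun x => f x + g x))
    by (apply functional_extensionality; intro; ring).
  revert pfg E; rewrite Efg; intros pfg E.
  exists pfg; rewrite E, Hf, Hg; ring.
Qed.

Lemma is_integral_scal c f v : is_integral f a b v -> is_integral (fun x => c * f x) a b (c * v).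
Proof.
  intros [pf Hf].
  pose proof (RiemannInt_P10 c (RiemannInt_P14 a b 0) pf) as pcf.
  pose proof (RiemannInt_P13 (RiemannInt_P14 a b 0) pf pcf) as E.
  rewrite RiemannInt_P15 in E.
  assert (Ecf : (fun x => fct_cte 0 x + c * f x) = (fun x => c * f x))
    by (apply functional_extensionality; intro; unfold fct_cte; ring).
  revert pcf E; rewrite Ecf; intros pcf E.
  exists pcf; rewrite E, Hf; ring.
Qed.

Lemma is_integral_comb p q f g h v w :
  is_integral f a b v -> is_integral g a b w -> (forall x, h x = p * f x + q * g x) ->
  is_integral h a b (p * v + q * w).
Proof.
  intros Hf Hg Eh.
  replace h with (fun x => p * f x + q * g x) by (apply functional_extensionality; auto).
  apply is_integral_add; apply is_integral_scal; auto.
Qed.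

Lemma is_integral_opp f v : is_integral f a b v -> is_integral (fun x => - f x) a b (- v).
Proof.
  intros Hf; replace (- v) with (-1 * v + 0 * 0) by ring.
  eapply is_integral_comb; eauto using is_integral_0; intros; simpl; ring.
Qed.

Lemma is_integral_ext_on f g v :
  a <= b -> (forall x, a <= x <= b -> f x = g x) -> is_integral f a b v -> is_integral g a b v.
Proof.
  intros Hab H [p Hp].
  assert (pg : Riemann_integrable g a b).
  { refine (@Riemann_integrable_ext f g a b _ p); intros x Hx; apply H.
    now rewrite Rmin_left, Rmax_right in Hx. }
  exists pg; rewrite <- Hp; symmetry; apply RiemannInt_P18; auto; intros; apply H; lra.
Qed.

Lemma Rint_vanish f : a <= b -> (forall u, a <= u <= b -> f u = 0) -> Rint f a b = 0.
Proof.
  intros Hab H; apply Rint_of, (is_integral_ext_on (fun _ => 0)); auto using is_integral_0.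
  intros; symmetry; auto.
Qed.
End RiemannIntegral.

(* Continuous functions on [a,b] are handled through their extension [f o clamp a b]
   to R, which is continuous everywhere. *)
Definition clamp (a b x : R) : R := Rmax a (Rmin b x).

Section Clamp.
Variables a b : R.
Hypothesis Hab : a <= b.

Lemma clamp_in x : a <= clamp a b x <= b.
Proof. unfold clamp, Rmax, Rmin; repeat destruct Rle_dec; lra. Qed.
Lemma clamp_id x : a <= x <= b -> clamp a b x = x.
Proof. intros; unfold clamp, Rmax, Rmin; repeat destruct Rle_dec; lra. Qed.
Lemma clamp_lip x y : Rabs (clamp a b y - clamp a b x) <= Rabs (y - x).
Proof.
  unfold clamp, Rmax, Rmin; repeat destruct Rle_dec; unfold Rabs; repeat destruct Rcase_abs; lra.
Qed.

Lemma cont_clamp f : cont_on f a b -> forall x, continuity_pt (fun y => f (clamp a b y)) x.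
Proof.
  intros H x; unfold continuity_pt, continue_in, limit1_in, limit_in; simpl.
  intros eps Heps.
  destruct (H (clamp a b x) (clamp_in x) eps Heps) as [alp [Halp Hc]].
  exists alp; split; auto; intros y [_ Hy]; simpl in Hc.
  destruct (Req_dec (clamp a b y) (clamp a b x)) as [E|E].
  - rewrite E; unfold R_dist; now rewrite Rminus_diag, Rabs_R0.
  - apply Hc; split; [apply clamp_in|]; unfold R_dist in *.
    eapply Rle_lt_trans; [apply clamp_lip|auto].
Qed.

Lemma is_integral_cont f t : cont_on f a b -> a <= t <= b -> is_integral f a t (Rint f a t).
Proof.
  intros H Ht.
  assert (pg : Riemann_integrable (fun y => f (clamp a b y)) a t)
    by (apply continuity_implies_RiemannInt; [lra|]; intros; apply cont_clamp; auto).
  assert (pf : Riemann_integrable f a t).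
  { refine (@Riemann_integrable_ext (fun y => f (clamp a b y)) f a t _ pg).
    intros x Hx; rewrite Rmin_left, Rmax_right in Hx; try lra; rewrite clamp_id; auto; lra. }
  rewrite (Rint_of f a t (RiemannInt pf)) by (exists pf; reflexivity).
  exists pf; reflexivity.
Qed.

Lemma cont_on_agree f g :
  (forall x, a <= x <= b -> f x = g x) -> (forall x, a <= x <= b -> continuity_pt f x) ->
  cont_on g a b.
Proof.
  intros E Cf x Hx eps Heps.
  destruct (Cf x Hx eps Heps) as [alp [Halp Hc]].
  exists alp; split; auto; intros y [Hy Hd].
  destruct (Req_dec y x) as [->|Ne].
  - simpl; unfold R_dist; now rewrite Rminus_diag, Rabs_R0.
  - rewrite <- !E; auto; apply Hc; split; auto; split; auto; exact I.
Qed.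

Lemma cont_Rint f : cont_on f a b -> cont_on (fun t => Rint f a t) a b.
Proof.
  intros H.
  assert (C : forall x, a <= x <= b -> continuity_pt (fun y => f (clamp a b y)) x)
    by (intros; apply cont_clamp; auto).
  apply (cont_on_agree (primitive Hab (FTC_P1 Hab C))).
  - intros x Hx; unfold primitive.
    destruct (Rle_dec a x); [|lra]; destruct (Rle_dec x b); [|lra].
    symmetry; apply Rint_of, (is_integral_ext_on a x (fun y => f (clamp a b y))); try lra.
    + intros; rewrite clamp_id; auto; lra.
    + eexists; reflexivity.
  - intros x Hx; apply derivable_continuous_pt.
    exists (f (clamp a b x)); exact (RiemannInt_P28 Hab C Hx).
Qed.
End Clamp.

Definition cx_is_integral (h : R -> Cx) (a b : R) (v : Cx) : Prop :=
  is_integral (fun x => fst (h x)) a b (fst v) /\ is_integral (fun x => snd (h x)) a b (snd v).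

Section ComplexIntegral.
Variables a b : R.

Lemma cx_is_integral_add h1 h2 v1 v2 : cx_is_integral h1 a b v1 -> cx_is_integral h2 a b v2 ->
  cx_is_integral (fun x => Cxadd (h1 x) (h2 x)) a b (Cxadd v1 v2).
Proof. intros [] []; split; simpl; apply is_integral_add; auto. Qed.
Lemma cx_is_integral_opp h v : cx_is_integral h a b v ->
  cx_is_integral (fun x => Cxopp (h x)) a b (Cxopp v).
Proof. intros []; split; simpl; apply is_integral_opp; auto. Qed.

Lemma cx_is_integral_mull c h v : cx_is_integral h a b v ->
  cx_is_integral (fun x => Cxmul c (h x)) a b (Cxmul c v).
Proof.
  intros [H1 H2]; split; simpl.
  - replace (fst c * fst v - snd c * snd v) with (fst c * fst v + - snd c * snd v) by ring.
    apply (is_integral_comb a b _ _ _ _ _ _ _ H1 H2); intros; ring.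
  - apply (is_integral_comb a b _ _ _ _ _ _ _ H2 H1); intros; ring.
Qed.
Lemma cx_is_integral_mulr c h v : cx_is_integral h a b v ->
  cx_is_integral (fun x => Cxmul (h x) c) a b (Cxmul v c).
Proof.
  intros H; replace (Cxmul v c) with (Cxmul c v) by cx_ring.
  replace (fun x => Cxmul (h x) c) with (fun x => Cxmul c (h x))
    by (apply functional_extensionality; intros; cx_ring).
  now apply cx_is_integral_mull.
Qed.

Lemma cx_is_integral_csum (h : nat -> R -> Cx) (v : nat -> Cx) l :
  (forall k, In k l -> cx_is_integral (h k) a b (v k)) ->
  cx_is_integral (fun x => csum (fun k => h k x) l) a b (csum v l).
Proof.
  induction l as [|k l IH]; intros H.
  - split; apply is_integral_0.
  - apply cx_is_integral_add; [apply H; left|apply IH; intros; apply H; right]; auto.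
Qed.
End ComplexIntegral.

Section MatrixIntegral.
Variables (m : nat) (a b : R).

Lemma mint_entry G t i j v : cx_is_integral (fun u => G u i j) a t v -> mint G a t i j = v.
Proof. intros [H1 H2]; unfold mint; apply Cx_ext; simpl; apply Rint_of; auto. Qed.

Lemma mint_is_integral F t i j : mcont_on m F a b -> a <= t <= b -> (i < m)%nat -> (j < m)%nat ->
  cx_is_integral (fun u => F u i j) a t (mint F a t i j).
Proof.
  intros H Ht Hi Hj; destruct (H i j Hi Hj).
  split; simpl; apply (is_integral_cont a b); auto; lra.
Qed.

Lemma mint_mmul_l F t X i j : mcont_on m F a b -> a <= t <= b -> (j < m)%nat ->
  cx_is_integral (fun u => mmul m X (F u) i j) a t (mmul m X (mint F a t) i j).
Proof.
  intros H Ht Hj.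
  apply (cx_is_integral_csum a t (fun k u => Cxmul (X i k) (F u k j))
                                 (fun k => Cxmul (X i k) (mint F a t k j))).
  intros k Hk; apply in_seq in Hk; apply cx_is_integral_mull, mint_is_integral; auto; lia.
Qed.
Lemma mint_mmul_r F t X i j : mcont_on m F a b -> a <= t <= b -> (i < m)%nat ->
  cx_is_integral (fun u => mmul m (F u) X i j) a t (mmul m (mint F a t) X i j).
Proof.
  intros H Ht Hi.
  apply (cx_is_integral_csum a t (fun k u => Cxmul (F u i k) (X k j))
                                 (fun k => Cxmul (mint F a t i k) (X k j))).
  intros k Hk; apply in_seq in Hk; apply cx_is_integral_mulr, mint_is_integral; auto; lia.
Qed.

Lemma comm_mint_l F t X : mcont_on m F a b -> a <= t <= b ->
  mat_eq m (comm m X (mint F a t)) (mint (fun u => comm m X (F u)) a t).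
Proof.
  intros H Ht i j Hi Hj; symmetry; apply mint_entry; unfold comm, madd, mopp.
  apply cx_is_integral_add; [|apply cx_is_integral_opp];
    [apply mint_mmul_l|apply mint_mmul_r]; auto.
Qed.
Lemma comm_mint_r F t X : mcont_on m F a b -> a <= t <= b ->
  mat_eq m (comm m (mint F a t) X) (mint (fun u => comm m (F u) X) a t).
Proof.
  intros H Ht i j Hi Hj; symmetry; apply mint_entry; unfold comm, madd, mopp.
  apply cx_is_integral_add; [|apply cx_is_integral_opp];
    [apply mint_mmul_r|apply mint_mmul_l]; auto.
Qed.

Lemma ad_chain_mint A ss F t : mcont_on m F a b -> a <= t <= b ->
  mat_eq m (ad_chain m A ss (mint F a t)) (mint (fun u => ad_chain m A ss (F u)) a t).
Proof.
  induction ss as [|s ss IH]; simpl; intros H Ht; [apply meq_refl|].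
  eapply meq_trans; [apply comm_compat; [apply meq_refl|apply IH; auto]|].
  apply (comm_mint_l (fun u => ad_chain m A ss (F u))); auto using mcont_ad_chain.
Qed.

Lemma mcont_mint F : a <= b -> mcont_on m F a b -> mcont_on m (fun t => mint F a t) a b.
Proof. intros Hab H i j Hi Hj; destruct (H i j Hi Hj); split; apply cont_Rint; auto. Qed.

Lemma mint_vanish F t : a <= t -> (forall u, a <= u <= t -> mat_eq m (F u) mzero) ->
  mat_eq m (mint F a t) mzero.
Proof.
  intros Ht H i j Hi Hj; unfold mint, mzero, Cx0.
  f_equal; apply Rint_vanish; auto; intros u Hu; rewrite H; auto.
Qed.
End MatrixIntegral.

Section MagnusTerms.
Variables (m : nat) (A : R -> Mat).

Lemma OmegaUpTo_stable n k t : (k <= n)%nat -> OmegaUpTo m A n k t = Omega m A k t.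
Proof.
  revert k; induction n as [|n IH]; intros k Hk.
  - now replace k with 0%nat by lia.
  - simpl; destruct (Nat.leb k n) eqn:E.
    + apply Nat.leb_le in E; auto.
    + apply Nat.leb_gt in E; replace k with (S n) by lia; unfold Omega; cbn -[Nat.leb].
      now rewrite (proj2 (Nat.leb_gt (S n) n)) by lia.
Qed.

Lemma Omega_1 t : Omega m A 1 t = mint A 0 t.
Proof. reflexivity. Qed.

Lemma Omega_succ k t : (1 <= k)%nat -> Omega m A (S k) t =
  mint (fun s => msum (map (fun j => mscal (bernoulli j / INR (fact j))
                                           (adsum m (OmegaUpTo m A k) A s j k))
                           (seq 1 k))) 0 t.
Proof.
  intros Hk; unfold Omega; cbn -[Nat.leb].
  rewrite (proj2 (Nat.leb_gt (S k) k)) by lia.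
  destruct k as [|k]; [lia|]; unfold OmegaStep; now replace (S (S k) - 1)%nat with (S k) by lia.
Qed.

Variable T : R.
Hypothesis HT : 0 <= T.
Hypothesis HA : mcont_on m A 0 T.

Lemma mcont_adsum om : (forall k, mcont_on m (om k) 0 T) ->
  forall j r, mcont_on m (fun s => adsum m om A s j r) 0 T.
Proof.
  intros Hom j; induction j as [|j IH]; intros r; simpl.
  - destruct (Nat.eqb r 0); auto using mcont_const.
  - apply (mcont_msum 0 T m (fun k s => comm m (om k s) (adsum m om A s j (r - k)))).
    intros; apply mcont_comm; auto.
Qed.

Lemma mcont_OmegaUpTo n k : mcont_on m (OmegaUpTo m A n k) 0 T.
Proof.
  revert k; induction n as [|n IH]; intros k; simpl; [apply mcont_const|].
  destruct (Nat.leb k n); auto.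
  destruct n as [|n]; apply mcont_mint; auto.
  apply (mcont_msum 0 T m (fun j s => mscal (bernoulli j / INR (fact j))
                                           (adsum m (OmegaUpTo m A (S n)) A s j (S (S n) - 1)))).
  intros; apply mcont_scal, mcont_adsum; auto.
Qed.
End MagnusTerms.

Section CommutingCase.
Variables (m : nat) (A : R -> Mat) (T : R).

(* Every composition r = k_1 + ... + k_j with r <= r0 either has a part k_i >= 2, or
   its innermost factor is ad_{om 1} A; so the adsum terms vanish as soon as
   [om 1, A] = 0 and om a = 0 for 2 <= a <= r0. *)
Lemma adsum_vanish om s r0 : mat_eq m (comm m (om 1%nat s) (A s)) mzero ->
  (forall a, (2 <= a <= r0)%nat -> mat_eq m (om a s) mzero) ->
  forall j r, (1 <= j)%nat -> (r <= r0)%nat -> mat_eq m (adsum m om A s j r) mzero.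
Proof.
  intros H1 H2 j; induction j as [|j IH]; intros r Hj Hr; [lia|].
  simpl; apply msum_vanish; intros a Ha; apply in_seq in Ha.
  destruct j as [|j].
  - simpl; destruct (Nat.eqb (r - a) 0) eqn:E.
    + apply Nat.eqb_eq in E; replace a with r in * by lia.
      destruct (Nat.eq_dec r 1) as [->|Ne]; auto.
      apply comm_vanish_l, H2; lia.
    + apply comm_vanish_r, meq_refl.
  - apply comm_vanish_r, IH; lia.
Qed.

Lemma Omega_vanish_commuting :
  (forall t, 0 <= t <= T -> mat_eq m (comm m (A t) (mint A 0 t)) mzero) ->
  forall k, (1 < k)%nat -> forall t, 0 <= t <= T -> mat_eq m (Omega m A k t) mzero.
Proof.
  intros H k; induction k as [k IH] using lt_wf_ind; intros Hk t Ht.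
  destruct k as [|k]; [lia|]; rewrite Omega_succ by lia.
  apply mint_vanish; [lra|]; intros u Hu.
  apply msum_vanish; intros j Hj; apply in_seq in Hj.
  apply mscal_vanish, adsum_vanish with k; try lia.
  - rewrite OmegaUpTo_stable, Omega_1, comm_anti by lia; apply mopp_vanish, H; lra.
  - intros a Ha; rewrite OmegaUpTo_stable by lia; apply IH; lia || lra.
Qed.
End CommutingCase.

Inductive comm_degree (m : nat) (T : R) (A : R -> Mat) : nat -> Mat -> Prop :=
| degree_A : forall s, 0 <= s <= T -> comm_degree m T A 1 (A s)
| degree_ad : forall d s X, 0 <= s <= T -> comm_degree m T A d X ->
    comm_degree m T A (S d) (comm m (A s) X)
| degree_add : forall d X Y, comm_degree m T A d X -> comm_degree m T A d Y ->
    comm_degree m T A d (madd X Y)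
| degree_opp : forall d X, comm_degree m T A d X -> comm_degree m T A d (mopp X)
| degree_scal : forall d r X, comm_degree m T A d X -> comm_degree m T A d (mscal r X)
| degree_zero : forall d, comm_degree m T A d mzero
| degree_eq : forall d X Y, comm_degree m T A d X -> mat_eq m X Y -> comm_degree m T A d Y
| degree_int : forall d F t, mcont_on m F 0 T -> 0 <= t <= T ->
    (forall u, 0 <= u <= t -> comm_degree m T A d (F u)) -> comm_degree m T A d (mint F 0 t).

Section CommutatorDegree.
Variables (m : nat) (T : R) (A : R -> Mat).

(* Degrees add under commutators: induction on the derivation of X, the generator
   case being the Jacobi identity [[A s, X], Y] = [A s, [X, Y]] - [X, [A s, Y]]. *)
Lemma comm_degree_comm a X : comm_degree m T A a X ->
  forall b Y, comm_degree m T A b Y -> comm_degree m T A (a + b) (comm m X Y).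
Proof.
  induction 1 as [s Hs|d s X Hs _ IH|d X X' _ IH1 _ IH2|d X _ IH|d r X _ IH|d
                 |d X X' _ IH HX|d F t HF Ht _ IH]; intros b Y HY.
  - now apply degree_ad.
  - rewrite jacobi; apply degree_add.
    + now apply degree_ad, IH.
    + apply degree_opp; replace (S d + b)%nat with (d + S b)%nat by lia.
      now apply IH, degree_ad.
  - rewrite comm_addl; apply degree_add; auto.
  - rewrite comm_oppl; apply degree_opp; auto.
  - rewrite comm_scall; apply degree_scal; auto.
  - rewrite comm_0l; apply degree_zero.
  - apply degree_eq with (comm m X Y); auto using comm_compat, meq_refl.
  - apply degree_eq with (mint (fun u => comm m (F u) Y) 0 t).
    + apply degree_int; auto; apply (mcont_comm 0 T m F (fun _ => Y)); auto using mcont_const.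
    + apply meq_sym, (comm_mint_r m 0 T); auto.
Qed.

Lemma comm_degree_msum d (f : nat -> Mat) l :
  (forall j, In j l -> comm_degree m T A d (f j)) -> comm_degree m T A d (msum (map f l)).
Proof.
  induction l as [|j l IH]; intros H; [apply degree_zero|].
  apply degree_add; [apply H; left|apply IH; intros; apply H; right]; auto.
Qed.

Lemma comm_degree_adsum om s r0 : 0 <= s <= T ->
  (forall a, (1 <= a <= r0)%nat -> comm_degree m T A a (om a s)) ->
  forall j r, (r <= r0)%nat -> comm_degree m T A (S r) (adsum m om A s j r).
Proof.
  intros Hs Hom j; induction j as [|j IH]; intros r Hr; simpl.
  - destruct (Nat.eqb r 0) eqn:E; [apply Nat.eqb_eq in E; subst; now apply degree_A|].
    apply degree_zero.
  - apply comm_degree_msum; intros a Ha; apply in_seq in Ha.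
    replace (S r) with (a + S (r - a))%nat by lia.
    apply comm_degree_comm; [apply Hom|apply IH]; lia.
Qed.

Hypothesis HT : 0 <= T.
Hypothesis HA : mcont_on m A 0 T.

Lemma comm_degree_Omega k : (1 <= k)%nat ->
  forall t, 0 <= t <= T -> comm_degree m T A k (Omega m A k t).
Proof.
  induction k as [k IH] using lt_wf_ind; intros Hk t Ht.
  destruct k as [|[|k]]; [lia| |].
  - rewrite Omega_1; apply degree_int; auto; intros; apply degree_A; lra.
  - rewrite Omega_succ by lia; apply degree_int; auto.
    + apply (mcont_msum 0 T m (fun j s => mscal (bernoulli j / INR (fact j))
                                     (adsum m (OmegaUpTo m A (S k)) A s j (S k)))).
      intros; apply mcont_scal, mcont_adsum; auto using mcont_OmegaUpTo.
    + intros u Hu; apply comm_degree_msum; intros j _; apply degree_scal.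
      apply comm_degree_adsum with (S k); [lra| |lia].
      intros a Ha; rewrite OmegaUpTo_stable by lia; apply IH; lia || lra.
Qed.

Variable n : nat.
Hypothesis Hnil : forall s : nat -> R, (forall i, (i <= n)%nat -> 0 <= s i <= T) ->
  mat_eq m (ncomm m A n s) mzero.

Lemma ad_chain_A_vanish ss s : Forall (fun u => 0 <= u <= T) ss -> 0 <= s <= T ->
  (n <= length ss)%nat -> mat_eq m (ad_chain m A ss (A s)) mzero.
Proof.
  intros Hss Hs Hlen.
  rewrite <- (firstn_skipn (length ss - n) ss), ad_chain_app.
  set (tail := skipn (length ss - n) ss).
  assert (Htail : length tail = n) by (unfold tail; rewrite length_skipn; lia).
  assert (Hpts : Forall (fun u => 0 <= u <= T) (tail ++ s :: nil)).
  { apply Forall_app; split; [|now constructor].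
    rewrite <- (firstn_skipn (length ss - n) ss) in Hss; apply Forall_app in Hss; apply Hss. }
  apply ad_chain_vanish; rewrite <- ncomm_ad_chain, Htail; apply Hnil; intros i _.
  destruct (Nat.lt_ge_cases i (length (tail ++ s :: nil))) as [Hi|Hi].
  - rewrite Forall_forall in Hpts; now apply Hpts, nth_In.
  - rewrite nth_overflow by auto; lra.
Qed.

Lemma ad_chain_vanish_of_degree d X : comm_degree m T A d X ->
  forall ss, Forall (fun u => 0 <= u <= T) ss -> (S n <= length ss + d)%nat ->
  mat_eq m (ad_chain m A ss X) mzero.
Proof.
  induction 1 as [s Hs|d s X Hs _ IH|d X Y _ IH1 _ IH2|d X _ IH|d r X _ IH|d
                 |d X Y _ IH HXY|d F t HF Ht _ IH]; intros ss Hss Hlen.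
  - apply ad_chain_A_vanish; auto; lia.
  - replace (ad_chain m A ss (comm m (A s) X)) with (ad_chain m A (ss ++ s :: nil) X)
      by now rewrite ad_chain_app.
    apply IH; [apply Forall_app; auto|rewrite length_app; simpl; lia].
  - rewrite ad_chain_add; apply madd_vanish; auto.
  - rewrite ad_chain_opp; apply mopp_vanish; auto.
  - rewrite ad_chain_scal; apply mscal_vanish; auto.
  - rewrite ad_chain_0; apply meq_refl.
  - eapply meq_trans; [apply ad_chain_compat, meq_sym, HXY|auto].
  - eapply meq_trans; [apply (ad_chain_mint m 0 T); auto|].
    apply mint_vanish; [lra|]; intros; auto.
Qed.
End CommutatorDegree.

Theorem mainTheorem10 (m : nat) (T : R) (A : R -> Mat) :
  0 < T -> mcont_on m A 0 T ->
  (* (i) *)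
  ((forall t, 0 <= t <= T -> mat_eq m (comm m (A t) (mint A 0 t)) mzero) ->
   forall k, (1 < k)%nat -> forall t, 0 <= t <= T ->
     mat_eq m (Omega m A k t) mzero /\ mat_eq m (Omega m A 1 t) (mint A 0 t))
  /\
  (* (ii) *)
  (forall n : nat, (1 <= n)%nat ->
   (forall s : nat -> R, (forall i, (i <= n)%nat -> 0 <= s i <= T) ->
      mat_eq m (ncomm m A n s) mzero) ->
   forall k, (n < k)%nat -> forall t, 0 <= t <= T ->
     mat_eq m (Omega m A k t) mzero).
Proof.
  intros HT HA; split.
  - intros Hcomm k Hk t Ht; split.
    + now apply (Omega_vanish_commuting m A T).
    + rewrite Omega_1; apply meq_refl.
  - intros n _ Hnil k Hk t Ht.
    assert (HT0 : 0 <= T) by lra.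
    assert (Hdeg : comm_degree m T A k (Omega m A k t))
      by (apply comm_degree_Omega; auto; lia).
    (* Omega_k has degree k > n, so already the empty adjoint chain annihilates it. *)
    apply (ad_chain_vanish_of_degree m T A HT0 n Hnil k _ Hdeg nil); simpl; auto; lia.
Qed.
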